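(* Let $s\in W_p$ be a reflection in a wall of $\overline{C}$, $\lambda\in C\cap X(T)$, $\mu\in\overline{C}\cap X(T)$ with $\mathrm{Stab}_{W_p}(\mu)=\{1,s\}$, and let $w\in W^{I,\lambda}$. Then $ws\cdot\lambda\in C_I\cap X(T)$ if and only if $wsw^{-1}\notin W_{I,p}$.
   Context: $G$ connected reductive over algebraically closed field of characteristic $p>0$ satisfying Jantzen's standard assumptions, $p\ge h$ (Coxeter number). $T$ a maximal torus, $X(T)$ its character group, $\Phi\supseteq\Phi^+\supseteq\Phi_s$ roots, positive roots and simple roots, $\rho$ the half-sum of positive roots, $\alpha^\vee$ coroots. $W_p$ is the affine Weyl group, generated by the reflections $s_{\alpha,mp}=t_{mp\alpha}s_\alpha$ ($\alpha\in\Phi$, $m\in\mathbb{Z}$, $t_\gamma$ translation by $\gamma$), acting on $X(T)\otimes\mathbb{R}$ by the dot action $w\cdot\nu=w(\nu+\rho)-\rho$; stabilisers are for the dot action. Fix $I\subseteq\Phi_s$; $W_{I,p}\subseteq W_p$ is generated by $s_\alpha$ and translations by $mp\alpha$ for $\alpha\in I$, $m\in\mathbb{Z}$. $C=\{x:0<\langle x+\rho,\alpha^\vee\rangle<p\ \forall\alpha\in\Phi^+\}$ (fundamental alcove), $\overline{C}$ the same with non-strict inequalities; $C_I=\{x:0<\langle x+\rho,\alpha^\vee\rangle<p\ \forall\alpha\in\Phi^+\cap\mathbb{Z}I\}$, $\overline{C}_I$ with non-strict inequalities. $W^{I,\lambda}=\{w\in W_p: w\cdot\lambda\in\overline{C}_I\}$.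 *)

(* Combinatorial model of the root datum of (G,T) and of the
   affine Weyl group W_p acting (by affine maps) on X(T) (x) Q = 'rV[rat]_n. *)
From HB Require Import structures.
From mathcomp Require Import all_boot all_order all_algebra.
Set Implicit Arguments. Unset Strict Implicit. Unset Printing Implicit Defensive.
Import Order.TTheory GRing.Theory Num.Theory.
Local Open Scope ring_scope.

(* X(T) = 'rV[int]_n, Y(T) = 'rV[int]_n, perfect pairing = dot product. *)
Record rootData (n : nat) := RootData {
  Phi  : seq 'rV[int]_n;
  Phip : seq 'rV[int]_n;
  Phis : seq 'rV[int]_n;
  cor  : 'rV[int]_n -> 'rV[int]_n
}.

Definition ipair n (x y : 'rV[int]_n) : int := \sum_(i < n) x 0 i * y 0 i.

Definition in_Zspan n (S : seq 'rV[int]_n) (v : 'rV[int]_n) : Prop :=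
  exists c : 'I_(size S) -> int, v = \sum_(i < size S) c i *: S`_i.

Definition reduced_root_datum n (R : rootData n) : Prop :=
  [/\ uniq (Phi R),
      {in Phi R &, injective (cor R)},
      {in Phi R, forall a, ipair a (cor R a) = 2},
      {in Phi R &, forall a b, b - ipair b (cor R a) *: a \in Phi R} &
      {in Phi R &, forall a b,
          cor R b - ipair a (cor R b) *: cor R a \in map (cor R) (Phi R)}]
  /\
  {in Phi R &, forall a b, forall c : rat,
      map_mx (fun z : int => z%:~R) b = c *: map_mx (fun z : int => z%:~R) a ->
      c = 1 \/ c = -1}.

Definition is_base n (R : rootData n) : Prop :=
  [/\ uniq (Phip R), uniq (Phis R),
      forall a, (a \in Phi R) = (a \in Phip R) || (- a \in Phip R),
      {subset Phis R <= Phip R} &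
      (forall c : 'I_(size (Phis R)) -> int,
          \sum_(i < size (Phis R)) c i *: (Phis R)`_i = 0 -> forall i, c i = 0)]
  /\ {in Phip R, forall a, exists c : 'I_(size (Phis R)) -> nat,
          a = \sum_(i < size (Phis R)) (Phis R)`_i *+ c i}.

Definition based_reduced_root_datum n (R : rootData n) : Prop :=
  reduced_root_datum R /\ is_base R.

(* Jantzen's assumption: derived group simply connected, i.e. the coroot
   lattice Z Phi^vee is saturated in Y(T). *)
Definition derived_simply_connected n (R : rootData n) : Prop :=
  forall (y : 'rV[int]_n) (k : int), k != 0 ->
    in_Zspan (map (cor R) (Phi R)) (k *: y) -> in_Zspan (map (cor R) (Phi R)) y.

(* Coxeter number h = 1 + max_{alpha in Phi^+} <rho, alpha^vee> *)
Definition coxeter_number n (R : rootData n) : nat :=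
  (\max_(a <- Phip R) (absz (ipair (\sum_(b <- Phip R) b) (cor R a)) %/ 2)).+1.

Definition cvI n (v : 'rV[int]_n) : 'rV[rat]_n := map_mx (fun z : int => z%:~R) v.

Definition qpair n (R : rootData n) (x : 'rV[rat]_n) (a : 'rV[int]_n) : rat :=
  \sum_(i < n) x 0 i * (cor R a 0 i)%:~R.

Definition rho n (R : rootData n) : 'rV[rat]_n := 2^-1 *: \sum_(a <- Phip R) cvI a.

Definition in_X n (x : 'rV[rat]_n) : Prop := exists v : 'rV[int]_n, x = cvI v.

Definition aff n := ('M[rat]_n * 'rV[rat]_n)%type.
Definition act n (w : aff n) (x : 'rV[rat]_n) : 'rV[rat]_n := x *m w.1 + w.2.
Definition aff1 n : aff n := (1%:M, 0).
(* act (affc w1 w2) = act w1 \o act w2 *)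
Definition affc n (w1 w2 : aff n) : aff n := (w2.1 *m w1.1, w2.2 *m w1.1 + w1.2).
Definition affinv n (w : aff n) : aff n := (invmx w.1, - (w.2 *m invmx w.1)).

(* s_{alpha, m p} = t_{m p alpha} s_alpha *)
Definition refl n (R : rootData n) (p : nat) (a : 'rV[int]_n) (m : int) : aff n :=
  (1%:M - (cvI (cor R a))^T *m cvI a, (m * p%:Z)%:~R *: cvI a).
Definition transl n (g : 'rV[rat]_n) : aff n := (1%:M, g).

Definition dot n (R : rootData n) (w : aff n) (x : 'rV[rat]_n) : 'rV[rat]_n :=
  act w (x + rho R) - rho R.

Definition generated n (S : aff n -> Prop) (w : aff n) : Prop :=
  exists ws : seq (aff n), (forall g, g \in ws -> S g \/ S (affinv g)) /\
                           w = foldr (@affc n) (aff1 n) ws.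

Definition Wp n (R : rootData n) (p : nat) : aff n -> Prop :=
  generated (fun g => exists2 a, a \in Phi R & exists m : int, g = refl R p a m).

Definition WIp n (R : rootData n) (p : nat) (I : seq 'rV[int]_n) : aff n -> Prop :=
  generated (fun g => (exists2 a, a \in I & g = refl R p a 0) \/
                      (exists2 a, a \in I & exists m : int,
                          g = transl ((m * p%:Z)%:~R *: cvI a))).

Definition in_C n (R : rootData n) (p : nat) (x : 'rV[rat]_n) : Prop :=
  forall a, a \in Phip R -> 0 < qpair R (x + rho R) a < p%:R.
Definition in_Cbar n (R : rootData n) (p : nat) (x : 'rV[rat]_n) : Prop :=
  forall a, a \in Phip R -> 0 <= qpair R (x + rho R) a <= p%:R.
Definition in_CI n (R : rootData n) (p : nat) (I : seq 'rV[int]_n) (x : 'rV[rat]_n) : Prop :=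
  forall a, a \in Phip R -> in_Zspan I a -> 0 < qpair R (x + rho R) a < p%:R.
Definition in_CIbar n (R : rootData n) (p : nat) (I : seq 'rV[int]_n) (x : 'rV[rat]_n) : Prop :=
  forall a, a \in Phip R -> in_Zspan I a -> 0 <= qpair R (x + rho R) a <= p%:R.

Definition W_I_lam n (R : rootData n) (p : nat) (I : seq 'rV[int]_n) (lam : 'rV[rat]_n)
  (w : aff n) : Prop := Wp R p w /\ in_CIbar R p I (dot R w lam).

(* s is the (dot-action) reflection in a wall of Cbar: s = s_{alpha,mp}, and
   its fixed hyperplane {x | <x+rho,alpha^vee> = mp} meets Cbar in a point
   lying on no other reflection hyperplane of W_p (a codim-1 facet). *)
Definition wall_reflection n (R : rootData n) (p : nat) (s : aff n) : Prop :=
  exists2 a, a \in Phi R & exists m : int, s = refl R p a m /\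
    exists x : 'rV[rat]_n, [/\ in_Cbar R p x,
      qpair R (x + rho R) a = (m * p%:Z)%:~R &
      forall b (m' : int), b \in Phi R -> qpair R (x + rho R) b = (m' * p%:Z)%:~R ->
        (b = a /\ m' = m) \/ (b = - a /\ m' = - m)].

(* Write s = s_{α,mp} and let x₀ be the point of its wall in C̄ that lies on no
   other reflecting hyperplane.  The conjugate w s w⁻¹ is again an affine
   reflection s_{β,kp}.  If it lies in W_{I,p}, it moves integral points by
   elements of ZI, so some nonzero multiple of β, hence a positive root ±β, lies
   in ZI; replacing (β,k) by (−β,−k) if needed, ⟨w·λ+ρ, β^∨⟩ ∈ [0,p] and
   ⟨ws·λ+ρ, β^∨⟩ = 2kp − ⟨w·λ+ρ, β^∨⟩ ∈ (0,p) would force 0 < kp < p.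
   Conversely, let γ ∈ Φ⁺ ∩ ZI.  Up to a translation by pZ, the linear part of w
   carries γ^∨ to a coroot δ^∨.  If δ = ±α, then w s w⁻¹ negates ⟨·, γ^∨⟩ up to a
   constant, so it is a reflection in ±γ, and these lie in W_{I,p} (by induction
   on the height of γ).  Otherwise λ+ρ, x₀ and s(λ+ρ) lie in one open strip
   between consecutive δ-hyperplanes, so ws·λ lies in the same open γ-strip as
   w·λ, which is (0,p) since w·λ ∈ C̄_I.  Finally ws·λ ∈ X(T) because
   ⟨ρ, α^∨⟩ ∈ Z for every root α. *)

From HB Require Import structures.
From mathcomp Require Import all_boot all_order all_algebra.
From mathcomp Require Import zify ring lra.
Set Implicit Arguments. Unset Strict Implicit. Unset Printing Implicit Defensive.
Import Order.TTheory GRing.Theory Num.Theory.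
Local Open Scope ring_scope.

Section Pairings.
Variable n : nat.
Implicit Types (x y z v : 'rV[int]_n) (u : 'rV[rat]_n).

Lemma ipairDl x y z : ipair (x + y) z = ipair x z + ipair y z.
Proof. by rewrite /ipair -big_split; apply: eq_bigr => i _; rewrite !mxE mulrDl. Qed.

Lemma ipairDr x y z : ipair z (x + y) = ipair z x + ipair z y.
Proof. by rewrite /ipair -big_split; apply: eq_bigr => i _; rewrite !mxE mulrDr. Qed.

Lemma ipairZl k x z : ipair (k *: x) z = k * ipair x z.
Proof. by rewrite /ipair mulr_sumr; apply: eq_bigr => i _; rewrite !mxE mulrA. Qed.

Lemma ipairZr k x z : ipair z (k *: x) = k * ipair z x.
Proof. by rewrite /ipair mulr_sumr; apply: eq_bigr => i _; rewrite !mxE mulrCA. Qed.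

Lemma ipairNl x z : ipair (- x) z = - ipair x z.
Proof. by rewrite -scaleN1r ipairZl mulN1r. Qed.

Lemma ipairNr x z : ipair z (- x) = - ipair z x.
Proof. by rewrite -scaleN1r ipairZr mulN1r. Qed.

Lemma ipairBl x y z : ipair (x - y) z = ipair x z - ipair y z.
Proof. by rewrite ipairDl ipairNl. Qed.

Lemma ipairBr x y z : ipair z (x - y) = ipair z x - ipair z y.
Proof. by rewrite ipairDr ipairNr. Qed.

Lemma ipair0l z : ipair 0 z = 0.
Proof. by rewrite -(scale0r 0) ipairZl mul0r. Qed.

Definition ipairE :=
  (ipairDl, ipairDr, ipairBl, ipairBr, ipairZl, ipairZr, ipairNl, ipairNr, ipair0l).

Definition qdot u v : rat := \sum_(i < n) u 0 i * (v 0 i)%:~R.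

Lemma qpairE (R : rootData n) u a : qpair R u a = qdot u (cor R a).
Proof. by []. Qed.

Lemma qdotDl u (u' : 'rV[rat]_n) v : qdot (u + u') v = qdot u v + qdot u' v.
Proof. by rewrite /qdot -big_split; apply: eq_bigr => i _; rewrite !mxE mulrDl. Qed.

Lemma qdotZl k u v : qdot (k *: u) v = k * qdot u v.
Proof. by rewrite /qdot mulr_sumr; apply: eq_bigr => i _; rewrite !mxE mulrA. Qed.

Lemma qdotNl u v : qdot (- u) v = - qdot u v.
Proof. by rewrite -scaleN1r qdotZl mulN1r. Qed.

Lemma qdotBl u (u' : 'rV[rat]_n) v : qdot (u - u') v = qdot u v - qdot u' v.
Proof. by rewrite qdotDl qdotNl. Qed.

Lemma qdot0l v : qdot 0 v = 0.
Proof. by rewrite -(scale0r 0) qdotZl mul0r. Qed.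

Lemma qdotDr u v (v' : 'rV[int]_n) : qdot u (v + v') = qdot u v + qdot u v'.
Proof.
by rewrite /qdot -big_split; apply: eq_bigr => i _; rewrite !mxE intrD mulrDr.
Qed.

Lemma qdotZr (k : int) u v : qdot u (k *: v) = k%:~R * qdot u v.
Proof.
by rewrite /qdot mulr_sumr; apply: eq_bigr => i _; rewrite !mxE intrM mulrCA.
Qed.

Lemma qdotNr u v : qdot u (- v) = - qdot u v.
Proof. by rewrite -scaleN1r qdotZr mulN1r. Qed.

Lemma qdotBr u v (v' : 'rV[int]_n) : qdot u (v - v') = qdot u v - qdot u v'.
Proof. by rewrite qdotDr qdotNr. Qed.

Lemma qdot_cvI x v : qdot (cvI x) v = (ipair x v)%:~R.
Proof.
by rewrite /qdot /ipair rmorph_sum; apply: eq_bigr => i _; rewrite !mxE -intrM.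
Qed.

Definition qdotE :=
  (qdotDl, qdotBl, qdotZl, qdotNl, qdot0l, qdotDr, qdotBr, qdotZr, qdotNr, qdot_cvI).

Lemma qdot_sum (s : seq 'rV[int]_n) v :
  qdot (\sum_(b <- s) cvI b) v = (\sum_(b <- s) ipair b v)%:~R.
Proof.
elim: s => [|b s IH]; first by rewrite !big_nil qdot0l.
by rewrite !big_cons qdotDl IH qdot_cvI intrD.
Qed.

Lemma qdot_ext v (v' : 'rV[int]_n) : (forall u, qdot u v = qdot u v') -> v = v'.
Proof.
have qdot_delta i w : qdot (delta_mx 0 i) w = (w 0 i)%:~R.
  rewrite /qdot (bigD1 i) //= big1 ?addr0; first by rewrite mxE !eqxx mul1r.
  by move=> j ji; rewrite mxE eqxx /= (negbTE ji) mul0r.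
move=> e; apply/rowP => i; apply/(@intr_inj rat).
by rewrite -!qdot_delta.
Qed.

Lemma cvID x y : cvI (x + y) = cvI x + cvI y.
Proof. exact: map_mxD. Qed.

Lemma cvIZ k x : cvI (k *: x) = k%:~R *: cvI x.
Proof. by apply/rowP => i; rewrite !mxE intrM. Qed.

Lemma cvIN x : cvI (- x) = - cvI x.
Proof. exact: map_mxN. Qed.

Lemma cvIB x y : cvI (x - y) = cvI x - cvI y.
Proof. exact: map_mxB. Qed.

Lemma cvI0 : cvI (0 : 'rV[int]_n) = 0.
Proof. exact: map_mx0. Qed.

Lemma cvI_inj : injective (@cvI n).
Proof. by move=> x y /rowP xy; apply/rowP => i; move: (xy i); rewrite !mxE => /intr_inj. Qed.

Definition cvIE := (cvID, cvIB, cvIZ, cvIN, cvI0).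

Lemma mulmx_tr_cvI u v (u' : 'rV[rat]_n) : u *m (cvI v)^T *m u' = qdot u v *: u'.
Proof.
rewrite [u *m _]mx11_scalar mul_scalar_mx; congr (_ *: _).
by rewrite /qdot mxE; apply: eq_bigr => i _; rewrite !mxE.
Qed.

Lemma cvI_mul_tr x v : cvI x *m (cvI v)^T = ((ipair x v)%:~R : rat)%:M.
Proof.
rewrite [LHS]mx11_scalar -qdot_cvI /qdot mxE; congr (_%:M).
by apply: eq_bigr => i _; rewrite !mxE.
Qed.

End Pairings.

Section AffineMaps.
Variable n : nat.
Implicit Types (g h w : aff n) (y : 'rV[rat]_n).

Lemma aff_ext g h : (forall y, act g y = act h y) -> g = h.
Proof.
case: g h => [A a] [B b] /= e.
have ab : a = b by move: (e 0); rewrite /act /= !mul0mx !add0r.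
subst b; congr (_, _); apply/row_matrixP => i.
by move: (e (delta_mx 0 i)); rewrite /act /= => /addIr; rewrite !rowE.
Qed.

Lemma act_affc g h y : act (affc g h) y = act g (act h y).
Proof. by rewrite /act /affc /= mulmxDl mulmxA addrA. Qed.

Lemma act_aff1 y : act (aff1 n) y = y.
Proof. by rewrite /act /aff1 /= mulmx1 addr0. Qed.

Lemma act_transl (t : 'rV[rat]_n) y : act (transl t) y = y + t.
Proof. by rewrite /act /transl /= mulmx1. Qed.

Lemma act_affinv g y : g.1 \in unitmx -> act g (act (affinv g) y) = y.
Proof. by move=> gU; rewrite /act /affinv /= mulmxDl mulNmx !mulmxKV // subrK. Qed.

Lemma act_affinvK g y : g.1 \in unitmx -> act (affinv g) (act g y) = y.
Proof. by move=> gU; rewrite /act /affinv /= mulmxDl !mulmxK // addrK. Qed.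

Lemma affcA g h w : affc g (affc h w) = affc (affc g h) w.
Proof. by apply: aff_ext => y; rewrite !act_affc. Qed.

Lemma aff1c g : affc (aff1 n) g = g.
Proof. by apply: aff_ext => y; rewrite act_affc act_aff1. Qed.

Lemma affc1 g : affc g (aff1 n) = g.
Proof. by apply: aff_ext => y; rewrite act_affc act_aff1. Qed.

Lemma affinv_unit g : ((affinv g).1 \in unitmx) = (g.1 \in unitmx).
Proof. by rewrite /affinv /= unitmx_inv. Qed.

Lemma affinvK g : g.1 \in unitmx -> affinv (affinv g) = g.
Proof.
move=> gU; apply: aff_ext => y.
by rewrite -{1}[y](act_affinvK y gU) act_affinvK ?affinv_unit.
Qed.

Lemma act_affinv_affc g h y : g.1 \in unitmx -> h.1 \in unitmx ->
  act (affinv (affc g h)) y = act (affinv h) (act (affinv g) y).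
Proof.
move=> gU hU; have ghU : (affc g h).1 \in unitmx by rewrite unitmx_mul hU gU.
by rewrite -{2}[y](act_affinv y ghU) act_affc act_affinvK // act_affinvK.
Qed.

Lemma foldr_affc_cat (s1 s2 : seq (aff n)) :
  foldr (@affc n) (aff1 n) (s1 ++ s2) =
  affc (foldr (@affc n) (aff1 n) s1) (foldr (@affc n) (aff1 n) s2).
Proof. by elim: s1 => [|g s1 IH] /=; rewrite ?aff1c // IH affcA. Qed.

Variable S : aff n -> Prop.

Lemma generated1 : generated S (aff1 n).
Proof. by exists [::]. Qed.

Lemma generated_gen g : S g -> generated S g.
Proof. by move=> Sg; exists [:: g]; rewrite /= affc1; split=> // h /[!inE] /eqP ->; left. Qed.

Lemma generated_affc g h : generated S g -> generated S h -> generated S (affc g h).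
Proof.
move=> [s1 [S1 ->]] [s2 [S2 ->]]; exists (s1 ++ s2); split; last by rewrite foldr_affc_cat.
by move=> u; rewrite mem_cat => /orP [/S1|/S2].
Qed.

Lemma generated_ind (P : aff n -> Prop) :
  P (aff1 n) ->
  (forall g h, S g \/ S (affinv g) -> generated S h -> P h -> P (affc g h)) ->
  forall w, generated S w -> P w.
Proof.
move=> P1 PS w [ws [Sws ->]]; elim: ws Sws => [|g ws IH] Sws //=.
have Sws' u : u \in ws -> S u \/ S (affinv u) by move=> uws; apply: Sws; rewrite inE uws orbT.
by apply: PS; [apply: Sws; rewrite mem_head | exists ws | apply: IH].
Qed.

End AffineMaps.

Section AffineReflections.
Variables (n : nat) (R : rootData n) (p : nat).
Implicit Types (a : 'rV[int]_n) (m : int) (y : 'rV[rat]_n).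

Lemma act_refl a m y :
  act (refl R p a m) y = y - (qdot y (cor R a) - (m * p%:Z)%:~R) *: cvI a.
Proof.
rewrite /act /refl /= mulmxBr mulmx1 mulmxA mulmx_tr_cvI.
by rewrite scalerBl opprB addrA addrAC.
Qed.

Lemma refl_unit a m : ipair a (cor R a) = 2 -> (refl R p a m).1 \in unitmx.
Proof.
move=> a2; suff /mulmx1_unit[] : (refl R p a m).1 *m (refl R p a m).1 = 1%:M by [].
rewrite /refl /= mulmxBl mul1mx mulmxBr mulmx1.
rewrite mulmxA -(mulmxA _ (cvI a)) cvI_mul_tr a2 mul_mx_scalar -scalemxAl.
by apply/matrixP => i j; rewrite !mxE; ring.
Qed.

Lemma affinv_refl a m : ipair a (cor R a) = 2 -> affinv (refl R p a m) = refl R p a m.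
Proof.
move=> a2; have aU := refl_unit m a2; apply: aff_ext => y.
rewrite -{1}[y](act_affinv y aU) act_affinvK //.
set z := act (affinv _) y; rewrite -[in RHS](act_affinv y aU) -/z.
by rewrite !act_refl !qdotE a2; apply/rowP => i; rewrite !mxE; ring.
Qed.

End AffineReflections.

Section RootDatum.
Variables (n : nat) (R : rootData n).
Implicit Types (a b c x y : 'rV[int]_n).

Definition sref a x := x - ipair x (cor R a) *: a.

Lemma srefN a x : sref a (- x) = - sref a x.
Proof. by rewrite /sref !ipairE scaleNr opprD opprK. Qed.

Lemma srefK a x : ipair a (cor R a) = 2 -> sref a (sref a x) = x.
Proof. by move=> a2; rewrite /sref !ipairE a2; apply/rowP => i; rewrite !mxE; ring. Qed.

(* A finite set cannot contain an infinite arithmetic progression. *)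
Lemma stable_shift_eq0 (P : seq 'rV[int]_n) (f : 'rV[int]_n -> 'rV[int]_n) x d :
  {in P, forall y, f y \in P} ->
  (forall j : nat, f (x + j%:Z *: d) = x + j.+1%:Z *: d) -> x \in P -> d = 0.
Proof.
move=> fP fd xP; pose prog j := x + j%:Z *: d.
have progP j : prog j \in P by elim: j => [|j IH]; rewrite /prog ?scale0r ?addr0 // -fd fP.
apply/eqP; apply: contraT => d0.
have prog_uniq : uniq (map prog (iota 0 (size P).+1)).
  rewrite map_inj_uniq ?iota_uniq // => i j /addrI /eqP.
  by rewrite -subr_eq0 -scalerBl scalemx_eq0 (negbTE d0) orbF subr_eq0 => /eqP [].
have /uniq_leq_size : {subset map prog (iota 0 (size P).+1) <= P}.
  by move=> y /mapP [j _ ->].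
by move/(_ prog_uniq); rewrite size_map size_iota ltnn.
Qed.

(* Two reflections with the same coroot that preserve a finite set have the
   same root: their composite translates [a] along [2 (a - b)]. *)
Lemma reflection_root_unique (P : seq 'rV[int]_n) g a b :
  a \in P -> ipair a g = 2 -> ipair b g = 2 ->
  {in P, forall y, y - ipair y g *: a \in P} ->
  {in P, forall y, y - ipair y g *: b \in P} -> a = b.
Proof.
move=> aP ag bg refl_a refl_b.
pose f y := let z := y - ipair y g *: b in z - ipair z g *: a.
suff /eqP : 2 *: (a - b) = 0 by rewrite scalemx_eq0 /= subr_eq0 => /eqP.
apply: (@stable_shift_eq0 P f a) => // [y yP | j].
  by apply: refl_a; apply: refl_b.
by rewrite /f !ipairE ag bg; apply/rowP => i; rewrite !mxE intS; ring.
Qed.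

Hypothesis HR : based_reduced_root_datum R.

Lemma Phi_uniq : uniq (Phi R).
Proof. by case: HR => [[[]]]. Qed.

Lemma root_pair2 a : a \in Phi R -> ipair a (cor R a) = 2.
Proof. by case: HR => [[[_ _ a2 _ _] _] _]; apply: a2. Qed.

Lemma sref_Phi a x : a \in Phi R -> x \in Phi R -> sref a x \in Phi R.
Proof. by case: HR => [[[_ _ _ srefP _] _] _]; apply: srefP. Qed.

(* The axioms only say that the right-hand side is the coroot of some root [c];
   the reflections of [c] and of [sref a b] (which is [s_a s_b s_a]) with that
   coroot both preserve [Phi R], so [c = sref a b]. *)
Lemma cor_sref a b : a \in Phi R -> b \in Phi R ->
  cor R (sref a b) = cor R b - ipair a (cor R b) *: cor R a.
Proof.
case: (HR) => [[[_ _ _ _ corP] _] _] aP bP.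
have /mapP [c cP ce] := corP a b aP bP; rewrite ce; congr (cor R _).
have [a2 b2] := (root_pair2 aP, root_pair2 bP).
apply: (reflection_root_unique (P := Phi R)) (root_pair2 cP) _ _ => //.
- exact: sref_Phi.
- by rewrite -ce /sref !ipairE a2 b2; ring.
- move=> y yP; rewrite -ce.
  have -> : y - ipair y (cor R b - ipair a (cor R b) *: cor R a) *: sref a b
                         = sref a (sref b (sref a y)).
    by rewrite /sref !ipairE a2; apply/rowP => i; rewrite !mxE; ring.
  by do 3 apply: sref_Phi => //.
- by move=> y yP; apply: sref_Phi.
Qed.

Lemma sref_root a : a \in Phi R -> sref a a = - a.
Proof. by move=> aP; rewrite /sref root_pair2 //; apply/rowP => i; rewrite !mxE; ring. Qed.

Lemma PhiN a : a \in Phi R -> - a \in Phi R.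
Proof. by move=> aP; rewrite -(sref_root aP) sref_Phi. Qed.

Lemma corN a : a \in Phi R -> cor R (- a) = - cor R a.
Proof.
move=> aP; rewrite -(sref_root aP) cor_sref // root_pair2 //.
by apply/rowP => i; rewrite !mxE; ring.
Qed.

Lemma cor_inj : {in Phi R &, injective (cor R)}.
Proof. by case: HR => [[[]]]. Qed.

Lemma root_neq0 a : a \in Phi R -> a != 0.
Proof. by move=> aP; apply/eqP => a0; move: (root_pair2 aP); rewrite a0 ipair0l. Qed.

Lemma ipair_sref a c x : a \in Phi R -> c \in Phi R ->
  ipair (sref a x) (cor R c) = ipair x (cor R (sref a c)).
Proof. by move=> aP cP; rewrite cor_sref // /sref !ipairE; ring. Qed.

Lemma perm_sref_Phi a : a \in Phi R -> perm_eq (map (sref a) (Phi R)) (Phi R).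
Proof.
move=> aP; have sref_uniq : uniq (map (sref a) (Phi R)).
  rewrite map_inj_uniq ?Phi_uniq // => x y e.
  by rewrite -(srefK x (root_pair2 aP)) e srefK ?root_pair2.
apply: uniq_perm => //; first exact: Phi_uniq.
have /uniq_min_size[] // : {subset map (sref a) (Phi R) <= Phi R}.
  by move=> y /mapP [x xP ->]; apply: sref_Phi.
by rewrite size_map.
Qed.

Lemma sref_eq_opp a b : a \in Phi R -> b \in Phi R -> sref a b = - b -> b = a \/ b = - a.
Proof.
move=> aP bP /(congr1 (@cvI n)); rewrite /sref !cvIE => e.
have ba : cvI b = ((ipair b (cor R a))%:~R / 2) *: cvI a.
  apply/rowP => i; move/rowP: e => /(_ i); rewrite !mxE => e; lra.
case: (HR) => [[_ reduced] _].
by case: (reduced a b aP bP _ ba) => k1; [left|right];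
  apply: cvI_inj; rewrite ba k1 ?scale1r ?scaleN1r ?cvIN.
Qed.

Lemma Phi_pos_or_neg a : a \in Phi R -> (a \in Phip R) || (- a \in Phip R).
Proof. by case: HR => _ [[_ _ PhiE _ _] _]; rewrite PhiE. Qed.

Lemma Phip_Phi a : a \in Phip R -> a \in Phi R.
Proof. by case: HR => _ [[_ _ PhiE _ _] _] aP; rewrite PhiE aP. Qed.

Lemma Phis_Phip a : a \in Phis R -> a \in Phip R.
Proof. by case: HR => _ [[_ _ _ sub _] _]; apply: sub. Qed.

Lemma Phis_Phi a : a \in Phis R -> a \in Phi R.
Proof. by move/Phis_Phip/Phip_Phi. Qed.

Lemma Phis_coord_uniq (c d : 'I_(size (Phis R)) -> int) :
  \sum_(i < size (Phis R)) c i *: (Phis R)`_i =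
  \sum_(i < size (Phis R)) d i *: (Phis R)`_i -> c =1 d.
Proof.
case: HR => _ [[_ _ _ _ free] _] e i; apply/eqP; rewrite -subr_eq0; apply/eqP.
apply: (free (fun i => c i - d i)).
by under eq_bigr do rewrite scalerBl; rewrite sumrB e subrr.
Qed.

Lemma Phip_coord a : a \in Phip R -> exists c : 'I_(size (Phis R)) -> nat,
  a = \sum_(i < size (Phis R)) (c i)%:Z *: (Phis R)`_i.
Proof.
case: HR => _ [_ coord] /coord [c ->]; exists c.
by apply: eq_bigr => i _; rewrite -natz scaler_nat.
Qed.

Lemma Phip_opp a : a \in Phip R -> - a \in Phip R -> False.
Proof.
move=> aP naP; have [c ac] := Phip_coord aP; have [d nad] := Phip_coord naP.
have c0 i : c i = 0%N.
  suff : (c i)%:Z = - (d i)%:Z by lia.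
  apply: (@Phis_coord_uniq (fun i => (c i)%:Z) (fun i => - (d i)%:Z)).
  by rewrite -ac; under eq_bigr do rewrite scaleNr; rewrite sumrN -nad opprK.
by move/eqP: (root_neq0 (Phip_Phi aP)); rewrite ac big1 // => i _; rewrite c0 scale0r.
Qed.

End RootDatum.

Lemma sum_involution_even (T : eqType) (tau : T -> T) (f : T -> int) (s : seq T) :
  uniq s -> {in s, forall x, tau x \in s} -> {in s, forall x, tau (tau x) = x} ->
  {in s, forall x, (2 %| f (tau x) + f x)%Z} ->
  {in s, forall x, tau x = x -> (2 %| f x)%Z} ->
  (2 %| \sum_(x <- s) f x)%Z.
Proof.
move: {2}(size s) (leqnn (size s)) => N; elim: N s => [|N IH] [|x r] //=;
  rewrite ?big_nil ?rpred0 // ltnS => szr /andP [xr r_uniq] tau_s tauK pair_even fix_even.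
have xs : x \in x :: r by rewrite mem_head.
have rs y : y \in r -> y \in x :: r by move=> yr; rewrite inE yr orbT.
have tau_eq_x y : y \in r -> tau y = x -> y = tau x by move=> yr <-; rewrite tauK ?rs.
have tau_r y : y \in r -> y != tau x -> tau y \in r.
  move=> yr ytx; have := tau_s y (rs y yr); rewrite inE => /orP [/eqP /(tau_eq_x y yr)|//].
  by move/eqP: ytx.
rewrite big_cons; have [tx | ntx] := eqVneq (tau x) x.
  rewrite rpredD ?fix_even // IH // => y yr; last 3 first.
  - exact/tauK/rs.
  - exact/pair_even/rs.
  - exact/fix_even/rs.
  by apply: tau_r; rewrite // tx; apply: contraNneq xr => <-.
have txr : tau x \in r by have := tau_s x xs; rewrite inE (negbTE ntx).
rewrite (big_rem _ txr) /= addrA rpredD 1?addrC ?pair_even //.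
have mem_r' y : y \in rem (tau x) r -> (y != tau x) && (y \in r) by rewrite mem_rem_uniq.
apply: IH; rewrite ?rem_uniq //.
- by rewrite size_rem //; lia.
- move=> y /mem_r' /andP [ytx yr]; rewrite mem_rem_uniq // inE tau_r // andbT.
  by apply: contraNneq xr => /(congr1 tau); rewrite (tauK y (rs y yr)) tauK // => <-.
- by move=> y /mem_r' /andP [_ /rs]; apply: tauK.
- by move=> y /mem_r' /andP [_ /rs]; apply: pair_even.
- by move=> y /mem_r' /andP [_ /rs]; apply: fix_even.
Qed.

Section Rho.
Variables (n : nat) (R : rootData n).
Hypothesis HR : based_reduced_root_datum R.

Lemma ipair_2rho_even a : a \in Phi R -> (2 %| \sum_(b <- Phip R) ipair b (cor R a))%Z.
Proof.
move=> aP; have a2 := root_pair2 HR aP.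
(* [tau b] is the positive one of [± sref a b], whose pairing with the coroot of
   [a] is [± <b, a^vee>]; its fixed points are orthogonal to [a^vee] or are [± a]. *)
pose tau b := if sref R a b \in Phip R then sref R a b else - sref R a b.
have ipair_sref_a b : ipair (sref R a b) (cor R a) = - ipair b (cor R a).
  by rewrite /sref !ipairE a2; ring.
apply: (@sum_involution_even _ tau).
- by case: HR => _ [[]].
- move=> b bP; rewrite /tau; case: ifP => // /negbT nP.
  by have := Phi_pos_or_neg HR (sref_Phi HR aP (Phip_Phi HR bP)); rewrite (negbTE nP).
- move=> b bP; rewrite {2}/tau; case: ifP => sbP; first by rewrite /tau srefK // bP.
  rewrite /tau srefN srefK //; case: ifP => [nbP|]; last by rewrite opprK.
  by case: (Phip_opp HR bP nbP).
- move=> b _; rewrite /tau; case: ifP => _; rewrite ?ipairNl ipair_sref_a ?opprK.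
    by rewrite addNr rpred0.
  by apply/dvdzP; exists (ipair b (cor R a)); ring.
- move=> b bP; rewrite /tau; case: ifP => _ => [/eqP|/eqP].
    rewrite /sref subr_eq addrC -subr_eq subrr eq_sym scalemx_eq0.
    by rewrite (negbTE (root_neq0 HR aP)) orbF => /eqP ->.
  rewrite eqr_oppLR => /eqP /(sref_eq_opp HR aP (Phip_Phi HR bP)) [] ->;
    by rewrite ?ipairNl a2 ?rpredN.
Qed.

Lemma qdot_rho_int a : a \in Phi R -> exists z : int, qdot (rho R) (cor R a) = z%:~R.
Proof.
move=> /ipair_2rho_even /dvdzP [z z2]; exists z.
by rewrite /rho qdotZl qdot_sum z2 intrM mulrC mulfK.
Qed.

End Rho.

Section AffineWeylGroup.
Variables (n : nat) (R : rootData n) (p : nat).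
Hypothesis HR : based_reduced_root_datum R.
Implicit Types (a b c : 'rV[int]_n) (y : 'rV[rat]_n) (w : aff n).

Lemma Wp_refl a m : a \in Phi R -> Wp R p (refl R p a m).
Proof. by move=> aP; apply: generated_gen; exists a => //; exists m. Qed.

Lemma refl_opp a k : a \in Phi R -> refl R p (- a) k = refl R p a (- k).
Proof.
move=> aP; apply: aff_ext => y; rewrite !act_refl corN // !qdotE !cvIE.
by apply/rowP => i; rewrite !mxE !(intrM, intrN); ring.
Qed.

Lemma Wp_ind (P : aff n -> Prop) :
  P (aff1 n) ->
  (forall a m w, a \in Phi R -> Wp R p w -> P w -> P (affc (refl R p a m) w)) ->
  forall w, Wp R p w -> P w.
Proof.
move=> P1 PS; apply: generated_ind => // g w gS Ww Pw.
suff [a aP [m ->]] : exists2 a, a \in Phi R & exists m, g = refl R p a m by apply: PS.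
case: gS => [//|[a aP [m gE]]]; exists a => //; exists m.
have a2 := root_pair2 HR aP.
have gU : g.1 \in unitmx by rewrite -affinv_unit gE refl_unit.
by rewrite -(affinvK gU) gE affinv_refl.
Qed.

Lemma Wp_unit w : Wp R p w -> w.1 \in unitmx.
Proof.
elim/Wp_ind => [|a m {}w aP _ wU]; first exact: unitmx1.
by rewrite unitmx_mul wU refl_unit ?root_pair2.
Qed.

Lemma Wp_coroot w : Wp R p w -> forall b, b \in Phi R -> exists2 b', b' \in Phi R &
  exists j : int, forall y, qpair R (act w y) b = qpair R y b' + (j * p%:Z)%:~R.
Proof.
elim/Wp_ind => [|a m {}w aP _ IH] b bP.
  by exists b => //; exists 0 => y; rewrite act_aff1 mul0r addr0.
have [b' b'P [j wb]] := IH _ (sref_Phi HR aP bP).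
exists b' => //; exists (j + m * ipair a (cor R b)) => y.
have := wb y; rewrite !qpairE act_affc act_refl cor_sref //; move: (act w y) => z.
rewrite !qdotE => zb.
have -> : qdot z (cor R b) =
    qdot y (cor R b') + (j * p%:Z)%:~R + (ipair a (cor R b))%:~R * qdot z (cor R a).
  by rewrite -zb; ring.
by rewrite !(intrD, intrM); ring.
Qed.

Lemma act_refl_conj a l b k y : a \in Phi R -> b \in Phi R ->
  act (refl R p a l) (act (refl R p b k) (act (refl R p a l) y)) =
  act (refl R p (sref R a b) (k - l * ipair a (cor R b))) y.
Proof.
move=> aP bP; rewrite !act_refl cor_sref // /sref !qdotE !cvIE root_pair2 //.
by apply/rowP => i; rewrite !mxE !(intrD, intrB, intrM); ring.
Qed.

Lemma Wp_conj_refl w a m : Wp R p w -> a \in Phi R ->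
  exists2 b, b \in Phi R & exists k : int,
    forall y, act w (act (refl R p a m) (act (affinv w) y)) = act (refl R p b k) y.
Proof.
move=> + aP; elim/Wp_ind => [|c l {}w cP Ww [b bP [k wb]]].
  exists a => //; exists m => y; rewrite act_aff1; congr act.
  by rewrite -{2}[y](@act_affinv _ (aff1 n) y (unitmx1 _ _)) act_aff1.
exists (sref R c b); first exact: sref_Phi.
exists (k - l * ipair c (cor R b)) => y.
rewrite act_affinv_affc ?refl_unit ?Wp_unit ?root_pair2 // affinv_refl ?root_pair2 //.
by rewrite act_affc wb act_refl_conj.
Qed.

Lemma Wp_act_cvI_rho w : Wp R p w ->
  forall v, exists v', act w (cvI v + rho R) = cvI v' + rho R.
Proof.
elim/Wp_ind => [|a m {}w aP _ IH] v; first by exists v; rewrite act_aff1.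
have [v1 wv] := IH v; have [z rho_a] := qdot_rho_int HR aP.
exists (v1 - (ipair v1 (cor R a) + z - m * p%:Z) *: a).
rewrite act_affc wv act_refl qdotDl rho_a !qdotE !cvIE.
by apply/rowP => i; rewrite !mxE !(intrD, intrB, intrM); ring.
Qed.

Lemma qpair_act_refl a m b y : a \in Phi R -> b \in Phi R ->
  qpair R (act (refl R p a m) y) b =
  qpair R y (sref R a b) + ((m * ipair a (cor R b)) * p%:Z)%:~R.
Proof. by move=> aP bP; rewrite !qpairE act_refl cor_sref // !qdotE !intrM; ring. Qed.

Lemma sref_opp_root a b : a \in Phi R -> b = a \/ b = - a -> sref R a b = - b.
Proof. by move=> aP [] ->; rewrite ?srefN sref_root // opprK. Qed.

Lemma refl_negating_root b g k (C : rat) : b \in Phi R -> g \in Phi R ->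
  (forall y, qpair R (act (refl R p b k) y) g = C - qpair R y g) -> b = g \/ b = - g.
Proof.
move=> bP gP negates; set r := ipair b (cor R g).
have act_g y : qpair R (act (refl R p b k) y) g =
    qpair R y g - (qpair R y b - (k * p%:Z)%:~R) * r%:~R.
  by rewrite !qpairE act_refl !qdotE.
have C_r : C = (k * p%:Z)%:~R * r%:~R.
  by have := negates 0; rewrite act_g !qpairE !qdot0l; lra.
have cor_g : 2 *: cor R g = r *: cor R b.
  apply: qdot_ext => y; rewrite !qdotZr; have := negates y; rewrite act_g C_r !qpairE.
  move: (qdot y (cor R g)) (qdot y (cor R b)) ((k * p%:Z)%:~R : rat) (r%:~R : rat) => X Y K r'.
  by rewrite -[(2%:~R : rat)]/(2%:R : rat); nra.
have : sref R b g = - g.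
  apply: (cor_inj HR); rewrite ?PhiN ?sref_Phi // cor_sref // corN // -/r -cor_g.
  by apply/rowP => i; rewrite !mxE; ring.
by case/(sref_eq_opp HR bP gP) => ->; [left|right; rewrite opprK].
Qed.

Lemma Wp_dot_X w v : Wp R p w -> in_X (dot R w (cvI v)).
Proof. by move=> /Wp_act_cvI_rho /(_ v) [v' wv]; exists v'; rewrite /dot wv addrK. Qed.

End AffineWeylGroup.

Section IntegralSpan.
Variables (n : nat) (S : seq 'rV[int]_n).
Implicit Types u v : 'rV[int]_n.

Lemma Zspan0 : in_Zspan S 0.
Proof. by exists (fun _ => 0); rewrite big1 // => i _; rewrite scale0r. Qed.

Lemma ZspanD u v : in_Zspan S u -> in_Zspan S v -> in_Zspan S (u + v).
Proof.
move=> [c ->] [d ->]; exists (fun i => c i + d i).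
by rewrite -big_split; apply: eq_bigr => i _; rewrite scalerDl.
Qed.

Lemma ZspanZ k u : in_Zspan S u -> in_Zspan S (k *: u).
Proof.
move=> [c ->]; exists (fun i => k * c i).
by rewrite scaler_sumr; apply: eq_bigr => i _; rewrite scalerA.
Qed.

Lemma ZspanN u : in_Zspan S u -> in_Zspan S (- u).
Proof. by rewrite -scaleN1r; apply: ZspanZ. Qed.

Lemma ZspanB u v : in_Zspan S u -> in_Zspan S v -> in_Zspan S (u - v).
Proof. by move=> Su /ZspanN; apply: ZspanD. Qed.

Lemma Zspan_mem u : u \in S -> in_Zspan S u.
Proof.
move=> uS; have uS' : (index u S < size S)%N by rewrite index_mem.
exists (fun i => (i == Ordinal uS')%:R).
rewrite (bigD1 (Ordinal uS')) //= big1 ?addr0; first by rewrite eqxx scale1r nth_index.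
by move=> i /negbTE ->; rewrite scale0r.
Qed.

Lemma Zspan_sum k (F : 'I_k -> 'rV[int]_n) :
  (forall i, in_Zspan S (F i)) -> in_Zspan S (\sum_(i < k) F i).
Proof. by move=> SF; elim/big_ind: _ => //; [exact: Zspan0 | exact: ZspanD]. Qed.

End IntegralSpan.

Section InvariantForm.
Variables (n : nat) (R : rootData n).
Hypothesis HR : based_reduced_root_datum R.
Implicit Types (a x y z : 'rV[int]_n).

Definition invform x y : int := \sum_(c <- Phi R) ipair x (cor R c) * ipair y (cor R c).

Lemma invformC x y : invform x y = invform y x.
Proof. by apply: eq_bigr => c _; rewrite mulrC. Qed.

Lemma invformDl x y z : invform (x + y) z = invform x z + invform y z.
Proof. by rewrite /invform -big_split; apply: eq_bigr => c _; rewrite ipairDl mulrDl. Qed.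

Lemma invformZl k x z : invform (k *: x) z = k * invform x z.
Proof. by rewrite /invform mulr_sumr; apply: eq_bigr => c _; rewrite ipairZl mulrA. Qed.

Lemma invformBl x y z : invform (x - y) z = invform x z - invform y z.
Proof. by rewrite invformDl -scaleN1r invformZl mulN1r. Qed.

Lemma invformNr x z : invform x (- z) = - invform x z.
Proof. by rewrite invformC -scaleN1r invformZl mulN1r invformC. Qed.

Lemma invform_sumr x k (d : 'I_k -> int) (v : 'I_k -> 'rV[int]_n) :
  invform x (\sum_(i < k) d i *: v i) = \sum_(i < k) d i * invform x (v i).
Proof.
rewrite invformC; elim/big_rec2: _ => [|i y1 y2 _ <-].
  by rewrite /invform big1 // => c _; rewrite ipair0l mul0r.
by rewrite invformDl invformZl invformC.
Qed.

Lemma invform_sref a x y : a \in Phi R -> invform (sref R a x) (sref R a y) = invform x y.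
Proof.
move=> aP; rewrite /invform -(perm_big _ (perm_sref_Phi HR aP)) big_map.
apply: eq_big_seq => c cP; have saP := sref_Phi HR aP cP.
by rewrite !(ipair_sref HR _ aP saP) srefK ?root_pair2.
Qed.

Lemma invform_root a x : a \in Phi R -> 2 * invform x a = ipair x (cor R a) * invform a a.
Proof.
move=> aP; have := invform_sref x a aP.
rewrite sref_root // invformNr {1}/sref invformBl invformZl.
by move: (ipair x (cor R a) * invform a a) => M; lia.
Qed.

Lemma invform_root_gt0 a : a \in Phi R -> 0 < invform a a.
Proof.
move=> aP; rewrite /invform (big_rem a aP) /= root_pair2 //.
rewrite (@lt_le_trans _ _ (2 * 2)) // lerDl.
by apply: sumr_ge0 => c _; rewrite -expr2 sqr_ge0.
Qed.

End InvariantForm.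

Lemma sum_natmul_gt0 k (c : 'I_k -> nat) (x : 'I_k -> int) :
  0 < \sum_(i < k) (c i)%:Z * x i -> exists i, (0 < c i)%N /\ 0 < x i.
Proof.
have [i /andP [ci xi] _ | none] := pickP (fun i => (0 < c i)%N && (0 < x i)); first by exists i.
rewrite ltNge => /negP []; apply: sumr_le0 => i _; move: (none i) => /negbT.
rewrite negb_and -leqNgt -leNgt leqn0 => /orP [/eqP -> | xi]; first by rewrite mul0r.
exact: mulr_ge0_le0.
Qed.

Section SimpleReflections.
Variables (n : nat) (R : rootData n).
Hypothesis HR : based_reduced_root_datum R.
Implicit Types g : 'rV[int]_n.

Local Notation alpha := (nth 0 (Phis R)).
Local Notation nPhis := (size (Phis R)).

Lemma Phis_nth_Phi (i : 'I_nPhis) : alpha i \in Phi R.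
Proof. exact/(Phis_Phi HR)/mem_nth. Qed.

Lemma Phip_coord_pair_gt0 g (c : 'I_nPhis -> nat) :
  g \in Phip R -> g = \sum_(i < nPhis) (c i)%:Z *: alpha i ->
  exists i, (0 < c i)%N /\ 0 < ipair g (cor R (alpha i)).
Proof.
move=> gP gc; have := invform_root_gt0 HR (Phip_Phi HR gP).
rewrite {2}gc invform_sumr => /sum_natmul_gt0 [i [ci gi]]; exists i; split => //.
have := invform_root HR g (Phis_nth_Phi i); have := invform_root_gt0 HR (Phis_nth_Phi i).
by move: (invform R (alpha i) (alpha i)) (invform R g (alpha i)) gi => B A; nia.
Qed.

Lemma sref_simple_coord g (i : 'I_nPhis) (c : 'I_nPhis -> int) :
  g = \sum_(l < nPhis) c l *: alpha l ->
  sref R (alpha i) g =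
  \sum_(l < nPhis) (c l - ipair g (cor R (alpha i)) * (l == i)%:R) *: alpha l.
Proof.
move=> gc; under eq_bigr do rewrite scalerBl.
rewrite sumrB /sref -gc (bigD1 i) //= big1 ?addr0; first by rewrite eqxx mulr1.
by move=> l /negbTE ->; rewrite mulr0 scale0r.
Qed.

Lemma sref_simple_Phip g (i : 'I_nPhis) :
  g \in Phip R -> g != alpha i -> sref R (alpha i) g \in Phip R.
Proof.
move=> gP gi; have [c gc] := Phip_coord HR gP.
have [j [ji cj]] : exists j, j != i /\ (0 < c j)%N.
  have [j /andP [ji cj] | none] := pickP (fun j => (j != i) && (0 < c j)%N); first by exists j.
  have g_ci : cvI g = (c i)%:~R *: cvI (alpha i).
    rewrite gc (bigD1 i) //= big1 ?addr0 ?cvIZ // => j ji.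
    move: (none j); rewrite ji /= => /negbT; rewrite -leqNgt leqn0 => /eqP ->.
    by rewrite scale0r.
  case: (HR) => [[_ reduced] _].
  case: (reduced _ _ (Phis_nth_Phi i) (Phip_Phi HR gP) _ g_ci) => ci.
    by case: (elimN eqP gi); apply: cvI_inj; rewrite g_ci ci scale1r.
  have : (0 : rat) <= (c i)%:~R by rewrite ler0z.
  by rewrite ci ler0N1.
have sg_coord := @sref_simple_coord g i (fun l => (c l)%:Z) gc.
case/orP: (Phi_pos_or_neg HR (sref_Phi HR (Phis_nth_Phi i) (Phip_Phi HR gP))) => //.
move=> /(Phip_coord HR) [e sg_neg]; exfalso.
have : (c j)%:Z - ipair g (cor R (alpha i)) * (j == i)%:R = - (e j)%:Z.
  apply: (Phis_coord_uniq HR (c := fun l => (c l)%:Z - ipair g (cor R (alpha i)) * (l == i)%:R)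
    (d := fun l => - (e l)%:Z)).
  rewrite -sg_coord -[sref _ _ _]opprK sg_neg -sumrN.
  by apply: eq_bigr => l _; rewrite scaleNr.
by rewrite (negbTE ji) mulr0 subr0; lia.
Qed.

End SimpleReflections.

Section ParabolicSubgroup.
Variables (n : nat) (R : rootData n) (p : nat) (I : seq 'rV[int]_n).
Hypotheses (HR : based_reduced_root_datum R) (HI : {subset I <= Phis R}).
Implicit Types (a b g v : 'rV[int]_n) (y : 'rV[rat]_n) (w : aff n).

Local Notation alpha := (nth 0 (Phis R)).
Local Notation nPhis := (size (Phis R)).

Lemma Zspan_Phis_coord v : in_Zspan I v -> exists d : 'I_nPhis -> int,
  v = \sum_(i < nPhis) d i *: alpha i /\ forall i : 'I_nPhis, alpha i \notin I -> d i = 0.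
Proof.
move=> [z ->].
have idxP (j : 'I_(size I)) : (index (nth 0%R I j) (Phis R) < nPhis)%N.
  by rewrite index_mem HI ?mem_nth.
pose idx j := Ordinal (idxP j).
exists (fun i => \sum_(j < size I | idx j == i) z j); split.
  under [RHS]eq_bigr do rewrite scaler_suml.
  rewrite (exchange_big_dep xpredT) //=; apply: eq_bigr => j _.
  by rewrite (big_pred1 (idx j)) /= ?nth_index ?HI ?mem_nth // => i; rewrite eq_sym.
move=> i iI; rewrite big1 // => j /eqP ji.
by move: iI; rewrite -ji /= nth_index ?HI ?mem_nth.
Qed.

Lemma Phis_coord_Zspan (d : 'I_nPhis -> int) :
  (forall i : 'I_nPhis, alpha i \notin I -> d i = 0) ->
  in_Zspan I (\sum_(i < nPhis) d i *: alpha i).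
Proof.
move=> d0; apply: Zspan_sum => i; have [iI|iI] := boolP (alpha i \in I).
  exact/ZspanZ/Zspan_mem.
by rewrite d0 // scale0r; apply: Zspan0.
Qed.

Lemma Zspan_Phip_support g (c : 'I_nPhis -> nat) i :
  in_Zspan I g -> g = \sum_(i < nPhis) (c i)%:Z *: alpha i -> (0 < c i)%N -> alpha i \in I.
Proof.
move=> /Zspan_Phis_coord [d [gd d0]] gc ci; apply: contraTT ci => iI.
by rewrite -eqn0Ngt -eqz_nat (Phis_coord_uniq HR (etrans (esym gc) gd)) d0.
Qed.

Lemma Zspan_root_multiple b (k : int) : b \in Phi R -> k != 0 -> in_Zspan I (k *: b) ->
  exists2 b', b' \in Phip R & in_Zspan I b' /\ (b' = b \/ b' = - b).
Proof.
move=> bP k0 kbI.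
have [b' b'P bb'] : exists2 b', b' \in Phip R & b' = b \/ b' = - b.
  by case/orP: (Phi_pos_or_neg HR bP) => ?; [exists b; last left | exists (- b); last right].
exists b' => //; split => //; have [c b'c] := Phip_coord HR b'P.
have /Zspan_Phis_coord [d [kb'd d0]] : in_Zspan I (k *: b').
  by case: bb' => ->; rewrite ?scalerN; [|apply: ZspanN].
rewrite b'c; apply: Phis_coord_Zspan => i iI.
have := Phis_coord_uniq HR (c := fun i => k * (c i)%:Z) (d := d) _ i.
rewrite d0 // => /(_ _)/eqP; rewrite mulf_eq0 (negbTE k0) => /(_ _)/eqP -> //.
by rewrite -kb'd b'c scaler_sumr; apply: eq_bigr => j _; rewrite scalerA.
Qed.

Definition WIp_gen (u : aff n) :=
  (exists2 a, a \in I & u = refl R p a 0) \/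
  (exists2 a, a \in I & exists m : int, u = transl ((m * p%:Z)%:~R *: cvI a)).

Lemma WIp_gen_inv (u : aff n) : WIp_gen u \/ WIp_gen (affinv u) -> WIp_gen u.
Proof.
case=> [//|[[a aI ua] | [a aI [m ua]]]].
  have a2 := root_pair2 HR (Phis_Phi HR (HI aI)).
  have uU : u.1 \in unitmx by rewrite -affinv_unit ua refl_unit.
  by left; exists a; rewrite // -(affinvK uU) ua affinv_refl.
have uU : u.1 \in unitmx by rewrite -affinv_unit ua unitmx1.
right; exists a => //; exists (- m); rewrite -(affinvK uU) ua.
by rewrite /affinv /transl /= invmx1 mulmx1 mulNr intrN scaleNr.
Qed.

Lemma WIp_act_cvI w : WIp R p I w ->
  forall v, exists v', act w (cvI v) = cvI v' /\ in_Zspan I (v' - v).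
Proof.
elim/(@generated_ind _ WIp_gen) => [v | g h /WIp_gen_inv gS _ IH v].
  by exists v; rewrite act_aff1 subrr; split => //; apply: Zspan0.
have [v1 [hv v1v]] := IH v; rewrite act_affc hv.
case: gS => [[a aI ->] | [a aI [m ->]]].
  exists (v1 - ipair v1 (cor R a) *: a); rewrite act_refl qdot_cvI mul0r subr0 !cvIE.
  by split => //; rewrite addrAC; apply/ZspanB/ZspanZ/Zspan_mem.
exists (v1 + (m * p%:Z) *: a); rewrite act_transl !cvIE.
by split => //; rewrite addrAC; apply/ZspanD/ZspanZ/Zspan_mem.
Qed.

(* Induction on the height: positivity of [invform] yields a simple root
   [alpha i] in the support of [g] with [<g, alpha_i^vee> > 0], the root
   [s_(alpha i) g] is lower, and [s_g] is its conjugate by [s_(alpha i)]. *)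
Lemma WIp_refl0 g : g \in Phip R -> in_Zspan I g -> WIp R p I (refl R p g 0).
Proof.
move=> gP; have [c gc] := Phip_coord HR gP.
move: {2}(\sum_(i < nPhis) c i)%N (leqnn (\sum_(i < nPhis) c i)) => N.
elim: N g c gP gc => [|N IH] g c gP gc csum gI.
  have c0 i : c i = 0%N by move: csum; rewrite (bigD1 i) //=; lia.
  move/eqP: (root_neq0 HR (Phip_Phi HR gP)); rewrite gc big1 // => i _.
  by rewrite c0 scale0r.
have [gI' | gnI] := boolP (g \in I); first by apply: generated_gen; left; exists g.
have [i [ci gi]] := Phip_coord_pair_gt0 HR gP gc.
have aI : alpha i \in I := Zspan_Phip_support gI gc ci.
set g' := sref R (alpha i) g.
have g'P : g' \in Phip R by apply: sref_simple_Phip => //; apply: contraNneq gnI => ->.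
have [e g'e] := Phip_coord HR g'P.
have e_c l : (e l)%:Z = (c l)%:Z - ipair g (cor R (alpha i)) * (l == i)%:R.
  apply: (Phis_coord_uniq HR (c := fun l => (e l)%:Z)
    (d := fun l => (c l)%:Z - ipair g (cor R (alpha i)) * (l == i)%:R)).
  by rewrite -g'e -sref_simple_coord.
have esum : (\sum_(l < nPhis) e l <= N)%N.
  suff : (\sum_(l < nPhis) e l)%:Z = (\sum_(l < nPhis) c l)%:Z - ipair g (cor R (alpha i)).
    by move: csum gi; lia.
  rewrite -!natz !natr_sum; under eq_bigr do rewrite natz e_c.
  rewrite sumrB; congr (_ - _); first by under eq_bigr do rewrite natz.
  rewrite (bigD1 i) //= big1 ?addr0 ?eqxx ?mulr1 // => l /negbTE ->.
  by rewrite mulr0.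
have g'I : in_Zspan I g' by apply/ZspanB/ZspanZ/Zspan_mem.
have -> : refl R p g 0 =
    affc (refl R p (alpha i) 0) (affc (refl R p g' 0) (refl R p (alpha i) 0)).
  apply: aff_ext => y; rewrite !act_affc act_refl_conj ?Phis_nth_Phi ?(Phip_Phi HR) //.
  by rewrite mul0r subr0 srefK // root_pair2 ?Phis_nth_Phi.
have alphaW : WIp R p I (refl R p (alpha i) 0).
  by apply: generated_gen; left; exists (alpha i).
by apply/generated_affc/generated_affc => //; apply: IH g'e esum g'I.
Qed.

Lemma WIp_transl v (k : int) :
  in_Zspan I v -> WIp R p I (transl ((k * p%:Z)%:~R *: cvI v)).
Proof.
move=> [z ->].
have -> : (k * p%:Z)%:~R *: cvI (\sum_(j < size I) z j *: I`_j) =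
          \sum_(j < size I) ((k * z j) * p%:Z)%:~R *: cvI I`_j.
  rewrite (big_morph (@cvI n) (@cvID n) (@cvI0 n)) scaler_sumr.
  by apply: eq_bigr => j _; rewrite cvIZ scalerA -intrM mulrAC.
elim/big_ind: _ => [|t t' Wt Wt'|j _]; first exact: generated1.
  have -> : transl (t + t') = affc (transl t) (transl t').
    by apply: aff_ext => y; rewrite act_affc !act_transl addrAC addrA.
  exact: generated_affc.
by apply: generated_gen; right; exists I`_j; [apply: mem_nth | exists (k * z j)].
Qed.

Lemma WIp_refl g k : g \in Phip R -> in_Zspan I g -> WIp R p I (refl R p g k).
Proof.
move=> gP gI.
have -> : refl R p g k = affc (transl ((k * p%:Z)%:~R *: cvI g)) (refl R p g 0).
  apply: aff_ext => y; rewrite act_affc act_transl !act_refl mul0r subr0.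
  by rewrite scalerBl opprB addrA addrAC.
by apply: generated_affc; [apply: WIp_transl | apply: WIp_refl0].
Qed.

Lemma WIp_refl_root b g k : g \in Phip R -> in_Zspan I g -> b = g \/ b = - g ->
  WIp R p I (refl R p b k).
Proof.
move=> gP gI [] ->; last rewrite (refl_opp p HR _ (Phip_Phi HR gP)).
all: exact: WIp_refl.
Qed.

End ParabolicSubgroup.

Section Strips.
Variable p : nat.
Hypothesis p_gt0 : (0 < p)%N.

Definition in_strip (k : int) (u : rat) :=
  ((k * p%:Z)%:~R < u) && (u < ((k + 1) * p%:Z)%:~R).

Lemma in_strip0 u : in_strip 0 u = (0 < u < p%:R).
Proof. by rewrite /in_strip mul0r add0r mul1r. Qed.

Lemma in_strip_uniq k k' u : in_strip k u -> in_strip k' u -> k = k'.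
Proof.
move=> /andP [ku uk] /andP [k'u uk'].
have : k * p%:Z < (k' + 1) * p%:Z by rewrite -(ltr_int rat); apply: lt_trans uk'.
have : k' * p%:Z < (k + 1) * p%:Z by rewrite -(ltr_int rat); apply: lt_trans uk.
by nia.
Qed.

Lemma in_strip_shift k j u : in_strip k u -> in_strip (k + j) (u + (j * p%:Z)%:~R).
Proof.
move=> /andP [ku uk]; apply/andP; split; first by rewrite mulrDl intrD ltrD2r.
by rewrite addrAC mulrDl [X in _ < X]intrD ltrD2r.
Qed.

Lemma in_strip_closed0 k u : in_strip k u -> 0 <= u <= p%:R -> k = 0.
Proof.
move=> /andP [ku uk] /andP [u0 up].
have : k * p%:Z < p%:Z by rewrite -(ltr_int rat); apply: lt_le_trans up.
have : 0 < (k + 1) * p%:Z by rewrite -(ltr0z rat); apply: le_lt_trans uk.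
by nia.
Qed.

Lemma mulp_not_in_open (k : int) : (0 : rat) < (k * p%:Z)%:~R < (p%:R : rat) -> False.
Proof.
move=> /andP [kp0 kpp].
have kp_gt0 : 0 < k * p%:Z by rewrite -(ltr0z rat).
have kp_ltp : k * p%:Z < p%:Z by rewrite -(ltr_int rat).
have p_gt0' : 0 < p%:Z by rewrite ltz_nat.
have k_gt0 : 0 < k by rewrite -(pmulr_lgt0 _ p_gt0').
by clear kp0 kpp; nia.
Qed.

End Strips.

Section Alcoves.
Variables (n : nat) (R : rootData n) (p : nat).
Hypotheses (HR : based_reduced_root_datum R) (p_gt0 : (0 < p)%N).
Implicit Types (b c : 'rV[int]_n) (y : 'rV[rat]_n).

Lemma root_in_strip y b : b \in Phi R ->
  (forall c, c \in Phip R -> (c = b \/ c = - b) -> 0 < qpair R y c < p%:R) ->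
  in_strip p (if b \in Phip R then 0 else -1) (qpair R y b).
Proof.
move=> bP open; case: ifP => [bP' | /negbT bN]; first by rewrite in_strip0 open //; left.
have bN' : - b \in Phip R by have := Phi_pos_or_neg HR bP; rewrite (negbTE bN).
have := open _ bN' (or_intror erefl).
rewrite /in_strip !qpairE corN // qdotNr addNr mul0r mulN1r intrN.
by rewrite ltrNr oppr0 ltrNl andbC.
Qed.

Section ParabolicAlcove.
Variable I : seq 'rV[int]_n.
Hypothesis HI : {subset I <= Phis R}.

Lemma WIp_refl_Zspan b k : b \in Phi R -> WIp R p I (refl R p b k) ->
  exists K : int, K != 0 /\ in_Zspan I (K *: b).
Proof.
move=> bP /(WIp_act_cvI HR HI) Wb; have b2 := root_pair2 HR bP.
have [k0 | k0] := eqVneq k 0.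
  rewrite k0 in Wb; exists (-2); split => //; have [v [bv vbI]] := Wb b.
  suff -> : -2 *: b = v - b by [].
  apply: cvI_inj; rewrite !cvIE -bv act_refl qdot_cvI b2 mul0r subr0.
  by apply/rowP => i; rewrite !mxE; ring.
exists (k * p%:Z); split; first by rewrite mulf_neq0 // -lt0n.
have [v [bv vbI]] := Wb 0; rewrite subr0 in vbI.
suff -> : (k * p%:Z) *: b = v by [].
by apply: cvI_inj; rewrite -bv cvI0 act_refl qdot0l cvIZ !sub0r scaleNr opprK.
Qed.

Lemma WIp_refl_not_CI b k y : b \in Phi R -> WIp R p I (refl R p b k) ->
  (forall c, c \in Phip R -> in_Zspan I c -> 0 <= qpair R y c <= p%:R) ->
  ~ (forall c, c \in Phip R -> in_Zspan I c ->
       0 < qpair R (act (refl R p b k) y) c < p%:R).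
Proof.
move=> bP Wb y_closed y'_open.
have [K [K0 KbI]] := WIp_refl_Zspan bP Wb.
have [c cP [cI cb]] := Zspan_root_multiple HR HI bP K0 KbI.
have cP' := Phip_Phi HR cP.
have [e b_c] : exists e : int, ipair b (cor R c) = 2 * e.
  case: cb => ->; first by exists 1; rewrite root_pair2 ?mulr1.
  by exists (-1); rewrite corN // ipairNr root_pair2 ?mulrN1.
have := y'_open c cP cI; have := y_closed c cP cI.
rewrite qpair_act_refl // (sref_opp_root HR bP cb).
rewrite !qpairE corN // qdotNr b_c; move: (qdot y (cor R c)) => u.
have -> : ((k * (2 * e) * p%:Z)%:~R : rat) = 2 * ((e * k) * p%:Z)%:~R.
  by rewrite -[2 : rat]/(2%:~R) -intrM; congr (_%:~R); ring.
by move=> /andP [u0 up] /andP [su0 sup]; apply: (@mulp_not_in_open p p_gt0 (e * k)); lra.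
Qed.

(* [w] carries the coroot of [g] to that of [± a] up to translation, so the
   conjugate negates [<., g^vee>] up to a constant: it is a reflection in [± g]. *)
Lemma WIp_conj_refl_root w a m b k g c (j : int) :
  Wp R p w -> a \in Phi R -> b \in Phi R -> g \in Phip R -> in_Zspan I g ->
  (forall y, act w (act (refl R p a m) (act (affinv w) y)) = act (refl R p b k) y) ->
  c = a \/ c = - a ->
  (forall y, qpair R (act w y) g = qpair R y c + (j * p%:Z)%:~R) ->
  WIp R p I (refl R p b k).
Proof.
move=> Ww aP bP gP gI conj ca wg.
have cP : c \in Phi R by case: ca => ->; rewrite ?PhiN.
apply: (WIp_refl_root p HR HI k gP gI).
apply: (@refl_negating_root _ _ p HR b g k (((2 * j + m * ipair a (cor R c)) * p%:Z)%:~R) bP).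
  exact: Phip_Phi.
move=> y; rewrite -conj wg -[in RHS](act_affinv y (Wp_unit HR Ww)) wg.
rewrite qpair_act_refl // sref_opp_root //; move: (act (affinv w) y) => z.
by rewrite !qpairE corN // qdotNr !(intrD, intrM); ring.
Qed.

Section Wall.
(* Points are shifted by [rho]: [x0] and [lam] stand for [x + rho] and [lambda + rho],
   where [x] is the point of the wall of [s_(a, m p)] given by [wall_reflection]. *)
Variables (a : 'rV[int]_n) (m : int) (x0 lam : 'rV[rat]_n).
Hypotheses (aP : a \in Phi R)
  (x0_closed : forall b, b \in Phip R -> 0 <= qpair R x0 b <= p%:R)
  (x0_wall : qpair R x0 a = (m * p%:Z)%:~R)
  (x0_facet : forall b (m' : int), b \in Phi R -> qpair R x0 b = (m' * p%:Z)%:~R ->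
     (b = a /\ m' = m) \/ (b = - a /\ m' = - m))
  (lam_alcove : forall b, b \in Phip R -> 0 < qpair R lam b < p%:R).

Lemma wall_alcove_same_strip b : b \in Phi R -> b <> a -> b <> - a ->
  exists k, in_strip p k (qpair R lam b) && in_strip p k (qpair R x0 b).
Proof.
move=> bP ba bNa; exists (if b \in Phip R then 0 else -1).
rewrite !root_in_strip // => [c cP cb|c cP _]; last exact: lam_alcove.
have off_wall m' : qpair R x0 c <> (m' * p%:Z)%:~R.
  move=> /(x0_facet (Phip_Phi HR cP)) [[ca _]|[ca _]]; case: cb => cb.
  - by apply: ba; rewrite -cb.
  - by apply: bNa; rewrite -ca cb opprK.
  - by apply: bNa; rewrite -cb.
  - by apply: ba; rewrite -(opprK a) -ca cb opprK.
have /andP [c0 cp] := x0_closed cP.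
have ne_0 := off_wall 0; have ne_p := off_wall 1.
rewrite mul0r in ne_0; rewrite mul1r in ne_p.
rewrite !lt_def c0 cp !andbT.
by apply/andP; split; apply/eqP => e; [apply: ne_0; rewrite e | apply: ne_p; rewrite -e].
Qed.

(* [s] fixes [x0] and maps strips for [sref a b] onto strips for [b], so it sends
   the common [sref a b]-strip of [lam] and [x0] to the [b]-strip of [x0]. *)
Lemma refl_same_strip b : b \in Phi R -> b <> a -> b <> - a ->
  exists k, in_strip p k (qpair R lam b) &&
            in_strip p k (qpair R (act (refl R p a m) lam) b).
Proof.
move=> bP ba bNa; have a2 := root_pair2 HR aP.
set b' := sref R a b; have b'P : b' \in Phi R by apply: sref_Phi.
have b'a : b' <> a by move=> e; apply: bNa; rewrite -(srefK b a2) -/b' e sref_root.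
have b'Na : b' <> - a.
  by move=> e; apply: ba; rewrite -(srefK b a2) -/b' e srefN sref_root // opprK.
have [k /andP [lam_k x0_k]] := wall_alcove_same_strip bP ba bNa.
have [k' /andP [lam_k' x0_k']] := wall_alcove_same_strip b'P b'a b'Na.
have s_x0 : act (refl R p a m) x0 = x0.
  by rewrite act_refl -qpairE x0_wall subrr scale0r subr0.
have := qpair_act_refl p HR m x0 aP bP; rewrite s_x0 -/b' => x0_b.
exists k; rewrite lam_k qpair_act_refl // -/b'.
have -> : k = k' + m * ipair a (cor R b).
  by apply: (in_strip_uniq p_gt0 x0_k); rewrite x0_b; apply: in_strip_shift.
exact: in_strip_shift.
Qed.

Lemma not_WIp_CI w b k : Wp R p w ->
  (forall y, act w (act (refl R p a m) (act (affinv w) y)) = act (refl R p b k) y) ->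
  b \in Phi R -> ~ WIp R p I (refl R p b k) ->
  (forall c, c \in Phip R -> in_Zspan I c -> 0 <= qpair R (act w lam) c <= p%:R) ->
  forall g, g \in Phip R -> in_Zspan I g ->
    0 < qpair R (act w (act (refl R p a m) lam)) g < p%:R.
Proof.
move=> Ww conj bP nWI wlam_closed g gP gI.
have [c cP [j wg]] := Wp_coroot HR Ww (Phip_Phi HR gP).
have [ca | ca] := eqVneq c a.
  by case: nWI; apply: (WIp_conj_refl_root Ww aP bP gP gI conj (or_introl ca) wg).
have [cNa | cNa] := eqVneq c (- a).
  by case: nWI; apply: (WIp_conj_refl_root Ww aP bP gP gI conj (or_intror cNa) wg).
have [k' /andP [lam_k' slam_k']] := refl_same_strip cP (elimN eqP ca) (elimN eqP cNa).
have k'j : k' + j = 0.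
  apply: (in_strip_closed0 p_gt0 (u := qpair R (act w lam) g)); last exact: wlam_closed.
  by rewrite wg; apply: in_strip_shift.
by rewrite -in_strip0 -k'j wg; apply: in_strip_shift.
Qed.

End Wall.
End ParabolicAlcove.
End Alcoves.

Theorem proposition4p13 (n : nat) (R : rootData n)
  (HR : based_reduced_root_datum R) (Hsc : derived_simply_connected R)
  (p : nat) (Hp : prime p) (Hh : (coxeter_number R <= p)%N)
  (I : seq 'rV[int]_n) (HI : {subset I <= Phis R})
  (s : aff n) (Hs : wall_reflection R p s)
  (lam mu : 'rV[int]_n) (Hlam : in_C R p (cvI lam)) (Hmu : in_Cbar R p (cvI mu))
  (Hstab : forall v, Wp R p v -> (dot R v (cvI mu) = cvI mu <-> v = aff1 n \/ v = s))
  (w : aff n) (Hw : W_I_lam R p I (cvI lam) w) :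
  (in_CI R p I (dot R (affc w s) (cvI lam)) /\ in_X (dot R (affc w s) (cvI lam)))
  <-> ~ WIp R p I (affc w (affc s (affinv w))).
Proof.
have p_gt0 := prime_gt0 Hp.
case: Hs => a aP [m [-> [x0 [x0_closed x0_wall x0_facet]]]].
case: Hw => Ww w_closed.
have [b bP [k conj]] := Wp_conj_refl HR m Ww aP.
have -> : affc w (affc (refl R p a m) (affinv w)) = refl R p b k.
  by apply: aff_ext => y; rewrite !act_affc conj.
have dot_rho u x : dot R u x + rho R = act u (x + rho R) by rewrite /dot subrK.
move: w_closed; rewrite /in_CIbar /in_CI !dot_rho act_affc => w_closed.
split=> [[CI _] WI | nWI].
  apply: (WIp_refl_not_CI HR p_gt0 HI bP WI w_closed).
  by rewrite -conj act_affinvK ?(Wp_unit HR Ww).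
split; first exact: (not_WIp_CI HR p_gt0 HI aP x0_closed x0_wall x0_facet Hlam Ww conj).
by apply: (Wp_dot_X HR); apply: generated_affc (Wp_refl p m aP).
Qed.
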